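(* Let $4.999\le r\le 5$, $1\le\theta\le 2.2$, and $\delta\in\mathbb{R}$. Define $u_0=u_1=1$, $u_2=\theta+\delta$, and $u_n=(r-\theta)u_{n-1}-(r-2\theta)u_{n-2}-\theta u_{n-3}$ for $n\ge 3$. Let $q(x)=1-(r-\theta)x+(r-2\theta)x^2+\theta x^3$ with discriminant $D=-27\theta^2-4\theta^3+6\theta^2r+6\theta r^2+\theta^2r^2-4r^3-2\theta r^3+r^4$. Suppose $D<0$, so that $q$ has one real root $\alpha$ and two non-real complex conjugate roots $\beta,\gamma$, and suppose $|\alpha|>1>|\beta|=|\gamma|>0$. Then $u_N\ge u_{N+1}$ for some integer $N>0$. *)

From Stdlib Require Import Reals Lra Lia.
From Coquelicot Require Import Coquelicot.
Open Scope R_scope.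

Fixpoint useq (r theta delta : R) (n : nat) : R :=
  match n with
  | O => 1
  | S O => 1
  | S (S O) => theta + delta
  | S ((S (S m as m1)) as m2) =>
      (r - theta) * useq r theta delta m2
      - (r - 2 * theta) * useq r theta delta m1
      - theta * useq r theta delta m
  end.

Definition qC (r theta : R) (z : C) : C :=
  (RtoC 1 - RtoC (r - theta) * z + RtoC (r - 2 * theta) * (z * z)
   + RtoC theta * (z * z * z))%C.

Definition qR (r theta x : R) : R :=
  1 - (r - theta) * x + (r - 2 * theta) * x ^ 2 + theta * x ^ 3.

Definition discr (r theta : R) : R :=
  - 27 * theta ^ 2 - 4 * theta ^ 3 + 6 * theta ^ 2 * r + 6 * theta * r ^ 2
  + theta ^ 2 * r ^ 2 - 4 * r ^ 3 - 2 * theta * r ^ 3 + r ^ 4.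

(* The characteristic roots of the recurrence are the reciprocals of the roots of
   q.  If u were strictly increasing, its difference sequence w would be positive
   and satisfy the same cubic recurrence.  Removing the real root alpha < -1
   gives the positive sequence w_n - alpha w_(n+1), which satisfies a two-term
   recurrence whose characteristic roots are the non-real numbers 1/beta,
   1/gamma.  No positive sequence does: its successive ratios t satisfy
   t_(n+1) = b + c / t_n, which forces them to decrease by a fixed amount at
   every step.  Only alpha < -1 (as q >= 1 on [1, oo)) and beta being non-real
   are used. *)
From Stdlib Require Import Reals Lra Lia Classical.
From Coquelicot Require Import Coquelicot.
Open Scope R_scope.

Lemma pos_seq_not_decreasing_by (t : nat -> R) (k : R) :
  0 < k -> (forall n, 0 < t n) -> ~ (forall n, t (S n) <= t n - k).
Proof.
  intros Hk Ht Hdec.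
  assert (Hbound : forall n, t n <= t O - INR n * k).
  { induction n as [|n IH]; [simpl; lra|].
    pose proof (Hdec n). rewrite S_INR. lra. }
  destruct (INR_unbounded (t O / k)) as [n Hn].
  pose proof (Hbound n). pose proof (Ht n).
  assert (t O < INR n * k).
  { apply (Rmult_lt_compat_r k) in Hn; [|lra].
    unfold Rdiv in Hn. rewrite Rmult_assoc, Rinv_l in Hn; lra. }
  lra.
Qed.

Lemma pos_seq_not_decreasing_by_inverse (t : nat -> R) (c : R) :
  0 < c -> (forall n, 0 < t n) -> ~ (forall n, t (S n) <= t n - c / t n).
Proof.
  intros Hc Ht Hdec.
  assert (Hpos_quot : forall n, 0 < c / t n) by (intro n; apply Rdiv_lt_0_compat; auto).
  assert (Hle_t0 : forall n, t n <= t O).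
  { induction n as [|n IH]; [lra|].
    pose proof (Hdec n). pose proof (Hpos_quot n). lra. }
  apply (pos_seq_not_decreasing_by t (c / t O)); [exact (Hpos_quot O) | exact Ht |].
  intro n. enough (c / t O <= c / t n) by (pose proof (Hdec n); lra).
  apply Rmult_le_compat_l; [lra|].
  apply Rinv_le_contravar; [apply Ht | apply Hle_t0].
Qed.

Lemma ratio_step_le (b c x : R) :
  0 < x -> b + c / x <= x - (- (b * b + 4 * c) / 4) / x.
Proof.
  intro Hx.
  assert (Hsq : x - (- (b * b + 4 * c) / 4) / x - (b + c / x) = (x - b / 2) ^ 2 / x)
    by (field; lra).
  assert (0 <= (x - b / 2) ^ 2 / x)
    by (apply Rdiv_le_0_compat; [apply pow2_ge_0 | exact Hx]).
  lra.
Qed.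

Lemma pos_seq_not_rec2_complex (z : nat -> R) (b c : R) :
  b * b + 4 * c < 0 -> (forall n, 0 < z n) ->
  ~ (forall n, z (S (S n)) = b * z (S n) + c * z n).
Proof.
  intros Hdisc Hz Hrec.
  set (t n := z (S n) / z n).
  assert (Ht : forall n, 0 < t n) by (intro n; apply Rdiv_lt_0_compat; auto).
  apply (pos_seq_not_decreasing_by_inverse t (- (b * b + 4 * c) / 4)); [lra | exact Ht |].
  intro n.
  replace (t (S n)) with (b + c / t n).
  2: { unfold t. rewrite Hrec. pose proof (Hz n). pose proof (Hz (S n)). field; lra. }
  apply ratio_step_le, Ht.
Qed.

Lemma real_quadratic_nonreal_root_discr_lt0 (a b c : R) (z : C) :
  a <> 0 -> Im z <> 0 -> (RtoC a * (z * z) + RtoC b * z + RtoC c = 0)%C ->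
  b * b - 4 * a * c < 0.
Proof.
  destruct z as [x y]; simpl. intros Ha Hy Hroot.
  pose proof (f_equal fst Hroot) as Hre. pose proof (f_equal snd Hroot) as Him.
  simpl in Hre, Him.
  assert (Hb : b = - 2 * a * x).
  { assert (Hy_factor : y * (2 * a * x + b) = 0) by lra.
    apply Rmult_integral in Hy_factor as [H | H]; [contradiction | lra]. }
  assert (Hc : c = a * (x * x + y * y)) by (subst b; nra).
  replace (b * b - 4 * a * c) with (- 4 * (a * a) * (y * y)) by (rewrite Hc, Hb; ring).
  assert (0 < a * a) by (apply Rsqr_pos_lt, Ha).
  assert (0 < y * y) by (apply Rsqr_pos_lt, Hy).
  nra.
Qed.

Lemma qR_ge1 (r theta x : R) :
  0 <= theta -> 2 * theta <= r -> 1 <= x -> 1 <= qR r theta x.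
Proof.
  intros Htheta Hr Hx. unfold qR.
  assert ((r - 2 * theta) * x <= (r - 2 * theta) * x ^ 2)
    by (apply Rmult_le_compat_l; [lra | simpl; nra]).
  assert (theta * x <= theta * x ^ 3)
    by (apply Rmult_le_compat_l; [lra | simpl; nra]).
  lra.
Qed.

Lemma qR_root_lt_neg1 (r theta alpha : R) :
  0 <= theta -> 2 * theta <= r -> qR r theta alpha = 0 -> 1 < Rabs alpha ->
  alpha < -1.
Proof.
  intros Htheta Hr Hroot Habs.
  destruct (Rcase_abs alpha) as [Hneg | Hnneg].
  - rewrite Rabs_left in Habs; lra.
  - rewrite Rabs_right in Habs; [|lra].
    pose proof (qR_ge1 r theta alpha Htheta Hr (Rlt_le _ _ Habs)). lra.
Qed.

(* Dividing q by (x - alpha): alpha q(x) = (x - alpha)(alpha theta x^2 + alpha e x - 1)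
   with e = r - 2 theta + alpha theta, the remainder being x q(alpha). *)
Lemma qC_factor (r theta alpha : R) (z : C) :
  qR r theta alpha = 0 ->
  (RtoC alpha * qC r theta z =
   (z - RtoC alpha) *
   (RtoC (alpha * theta) * (z * z) + RtoC (alpha * (r - 2 * theta + alpha * theta)) * z
    + RtoC (-1)))%C.
Proof.
  intro Hroot.
  assert (Hdiv : (RtoC alpha * qC r theta z =
    (z - RtoC alpha) *
    (RtoC (alpha * theta) * (z * z) + RtoC (alpha * (r - 2 * theta + alpha * theta)) * z
     + RtoC (-1)) + z * RtoC (qR r theta alpha))%C).
  { destruct z as [x y]. unfold qC, qR.
    apply injective_projections; simpl; ring. }
  rewrite Hdiv, Hroot, Cmult_0_r, Cplus_0_r. reflexivity.
Qed.

Lemma qR_deflated_discr_lt0 (r theta alpha : R) (beta : C) :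
  theta <> 0 -> alpha <> 0 -> qR r theta alpha = 0 ->
  qC r theta beta = RtoC 0 -> Im beta <> 0 ->
  alpha * (r - 2 * theta + alpha * theta) * (alpha * (r - 2 * theta + alpha * theta))
  + 4 * (alpha * theta) < 0.
Proof.
  intros Htheta Halpha Halpha_root Hbeta_root Hbeta_im.
  assert (Hquad : (RtoC (alpha * theta) * (beta * beta)
     + RtoC (alpha * (r - 2 * theta + alpha * theta)) * beta + RtoC (-1) = 0)%C).
  { pose proof (qC_factor r theta alpha beta Halpha_root) as Hprod.
    rewrite Hbeta_root, Cmult_0_r in Hprod.
    destruct (Ceq_dec (beta - RtoC alpha) 0) as [Heq | Hne].
    - exfalso. apply Hbeta_im.
      replace beta with (beta - RtoC alpha + RtoC alpha)%C by ring.
      rewrite Heq. simpl. lra.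
    - destruct (Ceq_dec (RtoC (alpha * theta) * (beta * beta)
        + RtoC (alpha * (r - 2 * theta + alpha * theta)) * beta + RtoC (-1)) 0)
        as [Hz | Hnz]; [exact Hz |].
      exfalso. exact (Cmult_neq_0 _ _ Hne Hnz (eq_sym Hprod)). }
  pose proof (real_quadratic_nonreal_root_discr_lt0 _ _ _ beta
    (Rmult_integral_contrapositive_currified _ _ Halpha Htheta) Hbeta_im Hquad).
  lra.
Qed.

Definition cubic_rec (r theta : R) (v : nat -> R) : Prop :=
  forall n, v (S (S (S n))) =
    (r - theta) * v (S (S n)) - (r - 2 * theta) * v (S n) - theta * v n.

Lemma useq_cubic_rec (r theta delta : R) : cubic_rec r theta (useq r theta delta).
Proof. intro n. reflexivity. Qed.

Lemma cubic_rec_diff (r theta : R) (v : nat -> R) :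
  cubic_rec r theta v -> cubic_rec r theta (fun n => v (S (S n)) - v (S n)).
Proof. intros Hv n. rewrite !Hv. ring. Qed.

(* Since 1/alpha is a characteristic root, v_n - alpha v_(n+1) kills that mode;
   the remaining two-term recurrence has characteristic polynomial
   X^2 - alpha e X - alpha theta, the reversal of the deflated factor of q. *)
Lemma cubic_rec_deflate (r theta alpha : R) (v : nat -> R) :
  cubic_rec r theta v -> qR r theta alpha = 0 ->
  forall n, v (S (S n)) - alpha * v (S (S (S n))) =
    alpha * (r - 2 * theta + alpha * theta) * (v (S n) - alpha * v (S (S n)))
    + alpha * theta * (v n - alpha * v (S n)).
Proof.
  intros Hv Hroot n. rewrite Hv.
  match goal with
  | |- ?lhs = ?rhs =>
      assert (Hdiff : lhs - rhs = v (S (S n)) * qR r theta alpha) by (unfold qR; ring)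
  end.
  rewrite Hroot, Rmult_0_r in Hdiff. lra.
Qed.

Theorem mainTheorem13 (r theta delta : R)
  (Hr : 4.999 <= r <= 5) (Htheta : 1 <= theta <= 2.2)
  (HD : discr r theta < 0)
  (Hroots : exists (alpha : R) (beta : C),
      qR r theta alpha = 0 /\ qC r theta beta = RtoC 0 /\ Im beta <> 0 /\
      Rabs alpha > 1 /\ 1 > Cmod beta /\ Cmod beta > 0) :
  exists N : nat, (N > 0)%nat /\ useq r theta delta N >= useq r theta delta (N + 1).
Proof.
  destruct Hroots as (alpha & beta & Halpha & Hbeta & Hbeta_im & Habs & _).
  assert (Halpha_lt : alpha < -1) by (apply (qR_root_lt_neg1 r theta); lra).
  apply NNPP. intro Hincr.
  set (w n := useq r theta delta (S (S n)) - useq r theta delta (S n)).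
  assert (Hw_pos : forall n, 0 < w n).
  { intro n. apply Rnot_le_lt. intro Hle. apply Hincr. exists (S n).
    split; [lia|]. rewrite Nat.add_1_r. unfold w in Hle. lra. }
  pose proof (cubic_rec_diff _ _ _ (useq_cubic_rec r theta delta)) as Hw_rec.
  apply (pos_seq_not_rec2_complex (fun n => w n - alpha * w (S n))
           (alpha * (r - 2 * theta + alpha * theta)) (alpha * theta)).
  - pose proof (qR_deflated_discr_lt0 r theta alpha beta
      ltac:(lra) ltac:(lra) Halpha Hbeta Hbeta_im).
    lra.
  - intro n. pose proof (Hw_pos n). pose proof (Hw_pos (S n)). nra.
  - exact (cubic_rec_deflate r theta alpha w Hw_rec Halpha).
Qed.
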